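(* Let $\ell\ge2$, $C\subseteq\mathbb{F}_q^n$ a linear code and $(A,B)$ an $\ell$-power $t$-error locating pair for $C$. Let $\mathbf{y}=\mathbf{c}+\mathbf{e}$ with $\mathbf{c}\in C$, $\mathrm{w}(\mathbf{e})=t$, $I_{\mathbf{e}}=\mathrm{supp}(\mathbf{e})$, and for $i=1,\dots,\ell$ let $\mathbf{e}^{(i)}=\sum_{h=1}^{i}\binom{i}{h}\mathbf{c}^{i-h}*\mathbf{e}^{h}$ (so that $\mathbf{y}^i=\mathbf{c}^i+\mathbf{e}^{(i)}$). Let $M_1=\{\mathbf{a}\in A\mid \langle \mathbf{a}*\mathbf{y},\mathbf{b}\rangle=0\ \forall \mathbf{b}\in B\}$, $M_i=\{\mathbf{a}\in A\mid \langle \mathbf{a}*\mathbf{y}^i,\mathbf{v}\rangle=0\ \forall \mathbf{v}\in (B^{\perp}*C^{i-1})^{\perp}\}$ for $2\le i\le\ell$, and $M=\bigcap_{i=1}^\ell M_i$. Then $$M_{I_{\mathbf{e}}}=\big((\mathbf{e}^{(1)}*B)_{I_{\mathbf{e}}}\big)^{\perp}\cap\bigcap_{i=2}^{\ell}\big((\mathbf{e}^{(i)}*(B^\perp*C^{i-1})^\perp)_{I_{\mathbf{e}}}\big)^{\perp},$$ with duals taken in $\mathbb{F}_q^{|I_{\mathbf{e}}|}$.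
   Context: All codes are $\mathbb{F}_q$-linear subspaces of $\mathbb{F}_q^n$. $\mathbf{u}*\mathbf{v}=(u_1v_1,\dots,u_nv_n)$, $\mathbf{u}^i=(u_1^i,\dots,u_n^i)$ with $\mathbf{u}^0=(1,\dots,1)$; $A*B$ is the span of all $\mathbf{a}*\mathbf{b}$; $C^1=C$, $C^i=C*C^{i-1}$; $\mathbf{u}*X=\{\mathbf{u}*\mathbf{x}:\mathbf{x}\in X\}$. $\langle\mathbf{u},\mathbf{v}\rangle=\sum_iu_iv_i$, $X^\perp$ the dual. $\mathrm{w}$ Hamming weight, $\mathrm{d}$ minimum distance, $\mathrm{supp}(\mathbf{x})=\{i:x_i\ne0\}$. For $J=\{j_1<\dots<j_s\}$, $X_J=\{(x_{j_1},\dots,x_{j_s}):\mathbf{x}\in X\}$. A pair $(A,B)$ is an $\ell$-power $t$-error locating pair for $C$ if: (1) $A*B\subseteq C^\perp$; (2) $\dim A>t$; (3) $\mathrm{d}(A^\perp)>t$; (4) $\mathrm{d}(A)+\mathrm{d}(C)>n$; (5) $\dim B+\sum_{i=2}^{\ell}\dim (B^\perp*C^{i-1})^\perp\ge t$. *)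

(* codes over a finite field F (= F_q) as subspaces of 'rV[F]_n. *)
From HB Require Import structures.
From mathcomp Require Import all_boot all_order all_algebra all_field.
Set Implicit Arguments. Unset Strict Implicit. Unset Printing Implicit Defensive.
Import Order.TTheory GRing.Theory Num.Theory.
Local Open Scope ring_scope.

Section Codes.
Variable F : finFieldType.

Definition elems m (X : {vspace 'rV[F]_m}) : seq 'rV[F]_m :=
  [seq x <- enum 'rV[F]_m | x \in X].

Definition starv n (u v : 'rV[F]_n) : 'rV[F]_n := \row_j (u 0 j * v 0 j).

Definition powv n (u : 'rV[F]_n) (i : nat) : 'rV[F]_n := \row_j (u 0 j ^+ i).

Definition dotv n (u v : 'rV[F]_n) : F := \sum_(j < n) u 0 j * v 0 j.

Definition starc n (A B : {vspace 'rV[F]_n}) : {vspace 'rV[F]_n} :=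
  <<[seq starv ab.1 ab.2 | ab <- [seq (a, b) | a <- elems A, b <- elems B]]>>%VS.

Definition starvc n (u : 'rV[F]_n) (X : {vspace 'rV[F]_n}) : {vspace 'rV[F]_n} :=
  <<[seq starv u x | x <- elems X]>>%VS.

(* C^1 = C, C^i = C * C^(i-1); C^0 is the span of (1,...,1) (never used) *)
Fixpoint codepow n (C : {vspace 'rV[F]_n}) (i : nat) : {vspace 'rV[F]_n} :=
  match i with
  | 0 => <[powv 0 0]>%VS
  | 1 => C
  | i'.+1 => starc C (codepow C i')
  end.

Definition dualc m (X : {vspace 'rV[F]_m}) : {vspace 'rV[F]_m} :=
  <<[seq x <- enum 'rV[F]_m | [forall v : 'rV[F]_m, (v \in X) ==> (dotv x v == 0%R)]]>>%VS.

Definition supp n (x : 'rV[F]_n) : {set 'I_n} := [set i | x 0 i != 0].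
Definition wt n (x : 'rV[F]_n) : nat := #|supp x|.

(* minimum distance; by convention n+1 (i.e. "infinity") for the zero code *)
Definition mindist n (X : {vspace 'rV[F]_n}) : nat :=
  \big[minn/n.+1]_(x : 'rV[F]_n | (x \in X) && (x != 0)) wt x.

(* puncturing / restriction to J = {j_1 < ... < j_s} *)
Definition restrv n (J : {set 'I_n}) (x : 'rV[F]_n) : 'rV[F]_#|J| :=
  \row_(k < #|J|) x 0 (enum_val k).
Definition restrc n (J : {set 'I_n}) (X : {vspace 'rV[F]_n}) : {vspace 'rV[F]_#|J|} :=
  <<[seq restrv J x | x <- elems X]>>%VS.

Definition Bi n (B C : {vspace 'rV[F]_n}) (i : nat) : {vspace 'rV[F]_n} :=
  dualc (starc (dualc B) (codepow C i.-1)).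

Definition locating_pair n (l t : nat) (C A B : {vspace 'rV[F]_n}) : Prop :=
  [/\ (starc A B <= dualc C)%VS,
      t < \dim A,
      t < mindist (dualc A),
      n < mindist A + mindist C
    & t <= \dim B + \sum_(2 <= i < l.+1) \dim (Bi B C i)]%N.

Definition err_i n (c e : 'rV[F]_n) (i : nat) : 'rV[F]_n :=
  \sum_(1 <= h < i.+1) starv (powv c (i - h)) (powv e h) *+ 'C(i, h).

Definition Mset n (A B C : {vspace 'rV[F]_n}) (y : 'rV[F]_n) (i : nat) : {vspace 'rV[F]_n} :=
  if i == 1%N then
    <<[seq a <- elems A | [forall b : 'rV[F]_n, (b \in B) ==> (dotv (starv a y) b == 0%R)]]>>%VS
  else
    <<[seq a <- elems A | [forall v : 'rV[F]_n,
          (v \in Bi B C i) ==> (dotv (starv a (powv y i)) v == 0%R)]]>>%VS.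

Definition Mcap n (l : nat) (A B C : {vspace 'rV[F]_n}) (y : 'rV[F]_n) : {vspace 'rV[F]_n} :=
  (\bigcap_(1 <= i < l.+1) Mset A B C y i)%VS.

End Codes.

From HB Require Import structures.
From mathcomp Require Import all_boot all_order all_algebra all_field.
Set Implicit Arguments. Unset Strict Implicit. Unset Printing Implicit Defensive.
Import Order.TTheory GRing.Theory.
Local Open Scope ring_scope.

(* For [a] in [A] write [y^i = c^i + e^(i)]. Since [A * B] is orthogonal to [C],
   [a * c] lies in [B^perp], so [a * c^i] lies in [B^perp * C^(i-1)] and the
   [c^i]-part of [<a * y^i, v>] vanishes for [v] in [B_i]; the [e^(i)]-part is
   supported on [I_e], where it equals [<a_I, (e^(i) * v)_I>]. Hence [a] is in
   [M_i] iff [a_I] is in the [i]-th dual on the right-hand side. Moreover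
   [d(A^perp) > t = |I_e|] makes [a |-> a_I] map [A] onto [F^|I_e|]: a nonzero
   vector orthogonal to [A_I] would extend by zero to a word of [A^perp] of
   weight at most [t]. So restricting to [I_e] commutes with the intersection.
   Only conditions (1) and (3) of a locating pair are needed. *)

Section Subspaces.
Variables (K : fieldType) (vT : vectType K).

Lemma span_submod_closed (S : {pred vT}) (s : seq vT) :
  submod_closed S -> {subset s <= S} -> {subset <<s>>%VS <= S}.
Proof.
case=> S0 SZD; elim: s => [|x s IHs] sS v; first by rewrite span_nil memv0 => /eqP->.
have sS' : {subset s <= S} by move=> u su; rewrite sS // inE su orbT.
rewrite span_cons => /memv_addP[_ /vlineP[k ->] [w /(IHs sS') Sw ->]].
by apply: SZD => //; rewrite sS ?mem_head.
Qed.

Lemma memv_span_filter (X : {vspace vT}) (s : seq vT) (P : pred vT) x :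
  s =i X -> submod_closed P ->
  (x \in <<[seq y <- s | P y]>>%VS) = (x \in X) && P x.
Proof.
move=> sX [P0 PZD]; apply/idP/andP => [xs | [xX Px]]; last first.
  by apply: memv_span; rewrite mem_filter Px sX.
have XP : submod_closed [predI X & P].
  split=> [|k u v /andP[uX Pu] /andP[vX Pv]]; first by rewrite inE mem0v.
  by rewrite inE memvD ?memvZ //=; apply: PZD.
by apply/andP; apply: (span_submod_closed XP) xs => y; rewrite mem_filter inE sX andbC.
Qed.

Lemma memv_bigcapP (I : eqType) (r : seq I) (U : I -> {vspace vT}) x :
  reflect (forall i, i \in r -> x \in U i) (x \in (\bigcap_(i <- r) U i)%VS).
Proof.
elim: r => [|i r IHr]; first by rewrite big_nil memvf; apply: ReflectT.
rewrite big_cons memv_cap; apply: (iffP andP) => [[xi /IHr xr] j | xr].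
  by rewrite inE => /predU1P[-> // | /xr].
split; first by apply: xr; rewrite mem_head.
by apply/IHr => j jr; apply: xr; rewrite inE jr orbT.
Qed.

End Subspaces.

Section Codes.
Variable F : finFieldType.

Lemma mem_elems m (X : {vspace 'rV[F]_m}) : elems X =i X.
Proof. by move=> x; rewrite mem_filter mem_enum andbT. Qed.

Lemma span_elems m (X : {vspace 'rV[F]_m}) : <<elems X>>%VS = X.
Proof.
apply/vspaceP => x; apply/idP/idP; last by rewrite -mem_elems; apply: memv_span.
by apply/subvP/span_subvP => y; rewrite mem_elems.
Qed.

Lemma memv_starc n (A B : {vspace 'rV[F]_n}) a b :
  a \in A -> b \in B -> starv a b \in starc A B.
Proof.
move=> aA bB; apply: memv_span; apply/mapP; exists (a, b) => //.
by apply/allpairsP; exists (a, b); rewrite !mem_elems.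
Qed.

Lemma starvC n (u v : 'rV[F]_n) : starv u v = starv v u.
Proof. by apply/rowP => j; rewrite !mxE mulrC. Qed.

Lemma starvA n (u v w : 'rV[F]_n) : starv u (starv v w) = starv (starv u v) w.
Proof. by apply/rowP => j; rewrite !mxE mulrA. Qed.

Fact starv_is_linear n (u : 'rV[F]_n) : linear (starv u).
Proof. by move=> k x y; apply/rowP => j; rewrite !mxE mulrDr mulrCA. Qed.
HB.instance Definition _ n u :=
  GRing.isLinear.Build F _ _ _ (@starv F n u) (starv_is_linear u).

Fact restrv_is_linear n (J : {set 'I_n}) : linear (@restrv F n J).
Proof. by move=> k x y; apply/rowP => i; rewrite !mxE. Qed.
HB.instance Definition _ n J :=
  GRing.isLinear.Build F _ _ _ (@restrv F n J) (restrv_is_linear J).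

Lemma dotvC n (u v : 'rV[F]_n) : dotv u v = dotv v u.
Proof. by apply: eq_bigr => j _; rewrite mulrC. Qed.

Lemma dotvDl n (u v w : 'rV[F]_n) : dotv (u + v) w = dotv u w + dotv v w.
Proof. by rewrite -big_split; apply: eq_bigr => j _; rewrite !mxE mulrDl. Qed.

Lemma dotvZl n k (u v : 'rV[F]_n) : dotv (k *: u) v = k * dotv u v.
Proof. by rewrite mulr_sumr; apply: eq_bigr => j _; rewrite !mxE mulrA. Qed.

Lemma dotv0l n (v : 'rV[F]_n) : dotv 0 v = 0.
Proof. by rewrite -(scale0r 0) dotvZl mul0r. Qed.

Lemma dotv_starvA n (a u v : 'rV[F]_n) : dotv (starv a u) v = dotv a (starv u v).
Proof. by apply: eq_bigr => j _; rewrite !mxE mulrA. Qed.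

Lemma span_orth_filterP m (X V : {vspace 'rV[F]_m}) (s : seq 'rV[F]_m)
    (phi : 'rV[F]_m -> 'rV[F]_m) x :
  s =i X -> linear phi ->
  reflect (x \in X /\ forall v, v \in V -> dotv (phi x) v = 0)
    (x \in <<[seq y <- s | [forall v, (v \in V) ==> (dotv (phi y) v == 0%R)]]>>%VS).
Proof.
move=> sX phiL; rewrite (memv_span_filter _ sX).
  apply: (iffP andP) => -[xX orth]; split=> //.
    by move=> v vV; apply/eqP; move/forall_inP: orth; apply.
  by apply/forall_inP => v /orth ->.
have phi0 : phi 0 = 0 by have := phiL (-1) 0 0; rewrite scaler0 addr0 scaleN1r addNr.
split=> [|k y z /forall_inP oy /forall_inP oz]; apply/forall_inP => v vV.
  by rewrite phi0 dotv0l.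
by rewrite phiL dotvDl dotvZl (eqP (oy v vV)) (eqP (oz v vV)) mulr0 addr0.
Qed.

Lemma dualcP m (X : {vspace 'rV[F]_m}) x :
  reflect (forall u, u \in X -> dotv x u = 0) (x \in dualc X).
Proof.
have sX : enum 'rV[F]_m =i fullv by move=> v; rewrite mem_enum memvf.
have id_lin : linear (@id 'rV[F]_m) by [].
apply: (iffP (span_orth_filterP X x sX id_lin)) => [[] // | orth].
by rewrite memvf.
Qed.

Lemma span_map_elems m k (f : {linear 'rV[F]_m -> 'rV[F]_k}) (X : {vspace 'rV[F]_m}) :
  <<[seq f x | x <- elems X]>>%VS = (linfun f @: X)%VS.
Proof.
rewrite -[in RHS](span_elems X) limg_span; congr <<_>>%VS.
by apply: eq_map => x; rewrite lfunE.
Qed.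

Lemma restrcP n (J : {set 'I_n}) (X : {vspace 'rV[F]_n}) z :
  reflect (exists2 x, x \in X & z = restrv J x) (z \in restrc J X).
Proof.
by rewrite /restrc span_map_elems; apply: (iffP memv_imgP) => -[x xX ->];
  exists x; rewrite ?lfunE.
Qed.

Lemma dualc_restrcP n (J : {set 'I_n}) (u : 'rV[F]_n) (X : {vspace 'rV[F]_n}) z :
  reflect (forall x, x \in X -> dotv z (restrv J (starv u x)) = 0)
    (z \in dualc (restrc J (starvc u X))).
Proof.
rewrite /restrc /starvc !span_map_elems; apply: (iffP (dualcP _ _)) => orth.
  by move=> x xX; rewrite -(lfunE (restrv J)) -(lfunE (starv u)) orth ?memv_img.
by move=> _ /memv_imgP[_ /memv_imgP[x xX ->] ->]; rewrite !lfunE; apply: orth.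
Qed.

Lemma supp_starvl n (u v : 'rV[F]_n) : supp (starv u v) \subset supp u.
Proof. by apply/subsetP => j; rewrite !inE mxE mulf_eq0 negb_or => /andP[]. Qed.

Lemma dotv_restrv n (J : {set 'I_n}) (x v : 'rV[F]_n) :
  supp x \subset J -> dotv x v = dotv (restrv J x) (restrv J v).
Proof.
move=> /subsetP sxJ; rewrite /dotv (bigID (mem J)) /= [X in _ + X]big1 ?addr0.
  by rewrite big_enum_val; apply: eq_bigr => k _; rewrite !mxE.
move=> j jJ; suff -> : x 0 j = 0 by rewrite mul0r.
by apply/eqP; apply: contraNT jJ => xj; apply: sxJ; rewrite inE.
Qed.

(* Summing over the preimage of [j] avoids choosing a default element of [J]. *)
Lemma restrv_extend n (J : {set 'I_n}) (w : 'rV[F]_#|J|) :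
  exists2 x : 'rV[F]_n, supp x \subset J & restrv J x = w.
Proof.
exists (\row_j \sum_(k | enum_val k == j) w 0 k).
  apply/subsetP => j; rewrite inE mxE; apply: contraR => jJ.
  by rewrite big_pred0 // => k; apply: contraNF jJ => /eqP <-; apply: enum_valP.
by apply/rowP => k; rewrite !mxE (big_pred1 k) // => k'; rewrite (inj_eq enum_val_inj).
Qed.

Lemma mindist_le n (X : {vspace 'rV[F]_n}) x :
  x \in X -> x != 0 -> (mindist X <= wt x)%N.
Proof. by move=> xX x0; apply: (bigmin_le_cond (T := nat)); rewrite xX. Qed.

Lemma dualc_eq0_fullv m (U : {vspace 'rV[F]_m}) :
  (forall w, w \in dualc U -> w = 0) -> U = fullv.
Proof.
move=> dualU0; pose s := elems U; pose G := \matrix_(i < size s) s`_i.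
have fullG : row_full G.
  rewrite /row_full -mxrank_tr -/(row_free G^T) -kermx_eq0.
  apply/rowV0P => w /sub_kermxP wG; apply: dualU0; apply/dualcP => u uU.
  have us : (index u s < size s)%N by rewrite index_mem mem_elems.
  have := congr1 (fun M : 'rV_(size s) => M 0 (Ordinal us)) wG.
  by rewrite !mxE => <-; apply: eq_bigr => j _; rewrite !mxE nth_index ?mem_elems.
apply/vspaceP => z; rewrite memvf; have /submxP[D ->] := submx_full z fullG.
rewrite mulmx_sum_row; apply: memv_suml => i _.
by rewrite rowK memvZ // -mem_elems mem_nth.
Qed.

Lemma restrc_fullv n (J : {set 'I_n}) (A : {vspace 'rV[F]_n}) :
  (#|J| < mindist (dualc A))%N -> restrc J A = fullv.
Proof.
move=> JA; apply: dualc_eq0_fullv => w /dualcP wA; have [x sxJ xw] := restrv_extend w.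
have xA : x \in dualc A.
  by apply/dualcP => a aA; rewrite (dotv_restrv _ sxJ) xw wA //; apply/restrcP; exists a.
apply/eqP; apply: contraTT JA => w0; rewrite -leqNgt.
have x0 : x != 0 by apply: contraNneq w0 => x0; rewrite -xw x0 linear0.
by apply: leq_trans (mindist_le xA x0) (subset_leq_card sxJ).
Qed.

Lemma powv1 n (u : 'rV[F]_n) : powv u 1 = u.
Proof. by apply/rowP => j; rewrite mxE expr1. Qed.

Lemma powvS n (u : 'rV[F]_n) k : powv u k.+1 = starv u (powv u k).
Proof. by apply/rowP => j; rewrite !mxE exprS. Qed.

Lemma powv_codepow n (C : {vspace 'rV[F]_n}) c k :
  c \in C -> (0 < k)%N -> powv c k \in codepow C k.
Proof.
move=> cC; elim: k => [//|[|k] IHk _]; first by rewrite powv1.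
by rewrite powvS; apply: memv_starc; last exact: IHk.
Qed.

Lemma err_iE n (c e : 'rV[F]_n) i j :
  err_i c e i 0 j = \sum_(1 <= h < i.+1) (c 0 j ^+ (i - h) * e 0 j ^+ h) *+ 'C(i, h).
Proof. by rewrite /err_i summxE; apply: eq_bigr => h _; rewrite mulmxnE !mxE. Qed.

Lemma powvD n (c e : 'rV[F]_n) i : powv (c + e) i = powv c i + err_i c e i.
Proof.
apply/rowP => j; rewrite !mxE err_iE exprDn big_ord_recl subn0 expr0 mulr1 bin0 mulr1n.
by rewrite big_add1 big_mkord.
Qed.

Lemma supp_err_i n (c e : 'rV[F]_n) i : supp (err_i c e i) \subset supp e.
Proof.
apply/subsetP => j; apply: contraTT; rewrite !inE !negbK err_iE => /eqP ej.
rewrite big_nat big1 // => h /andP[h_gt0 _].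
by rewrite ej expr0n eqn0Ngt h_gt0 mulr0 mul0rn.
Qed.

Lemma dotv_starv_powvD n (a c e v : 'rV[F]_n) i :
  dotv (starv a (powv (c + e) i)) v =
  dotv (starv a (powv c i)) v
  + dotv (restrv (supp e) a) (restrv (supp e) (starv (err_i c e i) v)).
Proof.
rewrite powvD linearD dotvDl; congr (_ + _).
have err_v_e : supp (starv (err_i c e i) v) \subset supp e.
  exact: subset_trans (supp_starvl _ _) (supp_err_i _ _ _).
by rewrite dotv_starvA dotvC (dotv_restrv _ err_v_e) dotvC.
Qed.

Lemma restrc_bigcap n (J : {set 'I_n}) (A : {vspace 'rV[F]_n}) (I : eqType) (r : seq I)
    (M : I -> {vspace 'rV[F]_n}) (N : I -> {vspace 'rV[F]_#|J|}) :
  restrc J A = fullv ->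
  (forall i a, i \in r -> (a \in M i) = (a \in A) && (restrv J a \in N i)) ->
  restrc J (\bigcap_(i <- r) M i) = (\bigcap_(i <- r) N i)%VS.
Proof.
move=> AJ MN; apply/vspaceP => z; apply/restrcP/memv_bigcapP.
  by move=> [a /memv_bigcapP aM ->] i ir; move: (aM i ir); rewrite MN // => /andP[].
move=> zN; have /restrcP[a aA za] : z \in restrc J A by rewrite AJ memvf.
by exists a => //; apply/memv_bigcapP => i ir; rewrite MN // aA -za zN.
Qed.

Definition Bsp n (B C : {vspace 'rV[F]_n}) (i : nat) : {vspace 'rV[F]_n} :=
  if i == 1%N then B else Bi B C i.

Lemma MsetP n (A B C : {vspace 'rV[F]_n}) y i a : (0 < i)%N ->
  reflect (a \in A /\ forall v, v \in Bsp B C i -> dotv (starv a (powv y i)) v = 0)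
    (a \in Mset A B C y i).
Proof.
have lin (u : 'rV[F]_n) : linear (fun x => starv x u).
  by move=> k x z; rewrite !(starvC _ u) linearP.
case: i => [|[|k]] // _; rewrite /Mset /Bsp /= ?powv1;
  exact: span_orth_filterP (mem_elems A) (lin _).
Qed.

Section LocatingPair.
Variables (n : nat) (C A B : {vspace 'rV[F]_n}) (c : 'rV[F]_n).
Hypotheses (AB_dualC : (starc A B <= dualc C)%VS) (cC : c \in C).

Lemma starv_dualc a : a \in A -> starv a c \in dualc B.
Proof.
move=> aA; apply/dualcP => b bB; rewrite dotv_starvA starvC -dotv_starvA.
by have /dualcP := subvP AB_dualC _ (memv_starc aA bB); apply.
Qed.

Lemma dotv_powv_Bsp a i v :
  a \in A -> (0 < i)%N -> v \in Bsp B C i -> dotv (starv a (powv c i)) v = 0.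
Proof.
move=> aA; case: i => [|[|k]] // _; rewrite /Bsp /=.
  by rewrite powv1; have /dualcP := starv_dualc aA; apply.
move=> /dualcP vB; rewrite dotvC powvS starvA; apply: vB.
by apply: memv_starc; [apply: starv_dualc | apply: powv_codepow].
Qed.

Lemma mem_Mset_restrv e i a : (0 < i)%N ->
  (a \in Mset A B C (c + e) i) =
  (a \in A) &&
  (restrv (supp e) a \in dualc (restrc (supp e) (starvc (err_i c e i) (Bsp B C i)))).
Proof.
move=> i_gt0; apply/(MsetP _ _ _ _ _ i_gt0)/andP => -[aA orth]; split=> //.
  apply/dualc_restrcP => v vB.
  by rewrite -(orth v vB) dotv_starv_powvD dotv_powv_Bsp ?add0r.
move=> v vB; rewrite dotv_starv_powvD dotv_powv_Bsp // add0r.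
by move/dualc_restrcP: orth; apply.
Qed.

End LocatingPair.

End Codes.

Theorem mainTheorem8 (F : finFieldType) (n l t : nat)
  (C A B : {vspace 'rV[F]_n}) (c e : 'rV[F]_n) :
  (2 <= l)%N ->
  locating_pair l t C A B ->
  c \in C ->
  wt e = t ->
  let y := c + e in
  let Ie := supp e in
  restrc Ie (Mcap l A B C y) =
  (dualc (restrc Ie (starvc (err_i c e 1) B)) :&:
   \bigcap_(2 <= i < l.+1) dualc (restrc Ie (starvc (err_i c e i) (Bi B C i))))%VS.
Proof.
move=> l_ge2 [AB_dualC _ dA_gt_t _ _] cC wt_e y Ie.
have AIe : restrc Ie A = fullv by apply: restrc_fullv; rewrite -wt_e in dA_gt_t.
transitivity
  (\bigcap_(1 <= i < l.+1) dualc (restrc Ie (starvc (err_i c e i) (Bsp B C i))))%VS.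
  apply: (restrc_bigcap AIe) => i a; rewrite mem_index_iota => /andP[i_gt0 _].
  exact: mem_Mset_restrv.
rewrite big_ltn; last exact: ltnW l_ge2.
congr (capv _ _); apply: eq_big_nat => i /andP[i_ge2 _].
by rewrite /Bsp gtn_eqF.
Qed.
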